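(* For $N\in\omega$ let $T_N=\{0,1\}^{\le N}$ be the set of $0$-$1$ sequences of length at most $N$ (including the empty sequence); for $s\in\{0,1\}^N$ let $F_s=\{s{\upharpoonright}k: k\le N\}\subseteq T_N$, and let $\mathcal{F}_N$ be the hereditary closure of $\{F_s: s\in\{0,1\}^N\}$. Let $x=\sum_{s\in\{0,1\}^N}\chi_{F_s}\in\mathbb{R}^{T_N}$. Then $\lVert x\rVert^{\mathcal{F}_N}=2^N(1+N/2)$, while $\lVert\chi_{F_s}\rVert^{\mathcal{F}_N}=1$ for each $s$. Consequently, if $T$ is the disjoint union of the sets $T_N$ ($N\in\omega$) (identified with $\omega$ via a bijection) and $\mathcal{F}=\bigcup_N\mathcal{F}_N$, then $\mathcal{F}$ is a compact hereditary family of finite sets covering $T$, there is no constant $C>0$ such that $\lVert\sum_{i\le n}x_i\rVert^{\mathcal{F}}\le C\sum_{i\le n}\lVert x_i\rVert^{\mathcal{F}}$ for all finite families $x_1,\dots,x_n\in c_{00}$, and $X^\mathcal{F}$ is not isomorphic to $X_\mathcal{F}^*$.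
   Context: For a countable index set $I$ and a family $\mathcal{F}$ of finite subsets of $I$ (hereditary: closed under subsets; covering $I$), a partition is a family $\mathcal{P}$ of subsets of $I$ with $\emptyset\in\mathcal{P}$, $\bigcup\mathcal{P}=I$, elements pairwise disjoint; $\mathbb{P}_\mathcal{F}$ is the set of partitions contained in $\mathcal{F}$; for $x\in\mathbb{R}^I$, $\lVert x\rVert^{\mathcal{F}}=\inf_{\mathcal{P}\in\mathbb{P}_\mathcal{F}}\sum_{F\in\mathcal{P}}\sup_{k\in F}|x(k)|$. The hereditary closure of a family is the smallest hereditary family containing it. $\chi_A$ is the characteristic function of $A$. $X^\mathcal{F}$ is the completion of $c_{00}$ (finitely supported sequences) under $\lVert\cdot\rVert^\mathcal{F}$, $X_\mathcal{F}$ the completion of $c_{00}$ under $\lVert x\rVert_\mathcal{F}=\sup_{F\in\mathcal{F}}\sum_{k\in F}|x(k)|$, and $X_\mathcal{F}^*$ its dual. Compactness refers to the topology of $2^I$. *)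

From HB Require Import structures.
From mathcomp Require Import all_boot all_order all_algebra.
From mathcomp Require Import all_classical all_reals all_analysis.
Import Order.TTheory GRing.Theory Num.Theory.

Set Implicit Arguments.
Unset Strict Implicit.
Unset Printing Implicit Defensive.

Local Open Scope classical_set_scope.
Local Open Scope ring_scope.

Section Families.
Context (I : choiceType).

Definition hereditary (F : set (set I)) : Prop :=
  forall A B, F A -> B `<=` A -> F B.

Definition hered_closure (G : set (set I)) : set (set I) :=
  [set A | forall H, hereditary H -> G `<=` H -> H A].

Definition covering (F : set (set I)) : Prop :=
  \bigcup_(A in F) A = setT.

Definition finite_members (F : set (set I)) : Prop :=
  forall A, F A -> finite_set A.

Definition is_partition (P : set (set I)) : Prop :=
  [/\ P set0, \bigcup_(A in P) A = setT &
      forall A B, P A -> P B -> A <> B -> A `&` B = set0].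

Definition partitions_in (F : set (set I)) : set (set (set I)) :=
  [set P | is_partition P /\ P `<=` F].

Definition c00 (R : realType) (x : I -> R) : Prop :=
  finite_set [set k | x k != 0].

Definition blocksup (R : realType) (x : I -> R) (A : set I) : \bar R :=
  ereal_sup ([set 0%E] `|` [set (`|x k|)%:E | k in A]).

Definition upnorm (R : realType) (F : set (set I)) (x : I -> R) : \bar R :=
  ereal_inf [set (\esum_(A in P) blocksup x A)%E | P in partitions_in F].

Definition lownorm (R : realType) (F : set (set I)) (x : I -> R) : \bar R :=
  ereal_sup [set (\esum_(k in A) (`|x k|)%:E)%E | A in F].

Definition pairing (R : realType) (f x : I -> R) : R :=
  (\sum_(k \in [set k | x k != 0]) f k * x k)%R.

(** Norm of f as a functional on (c00, ||.||_F), i.e. the norm of the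
    dual space X_F^* (continuous functionals on the completion X_F are
    exactly the bounded functionals on the dense subspace c00, and these
    are represented by their values f k on the unit vectors). *)
Definition dualnorm (R : realType) (F : set (set I)) (f : I -> R) : \bar R :=
  ereal_sup [set (`|pairing f x|)%:E |
              x in [set x | c00 x /\ (lownorm F x <= 1)%E]].

End Families.

Definition TN (N : nat) := {s : seq bool | size s <= N}%N.

Definition Fs (N : nat) (s : N.-tuple bool) : set (TN N) :=
  [set t | exists2 k : nat, (k <= N)%N & val t = take k s].

Definition FN (N : nat) : set (set (TN N)) :=
  hered_closure [set Fs s | s in [set: N.-tuple bool]].
Arguments FN N : clear implicits.

Definition xN (R : realType) (N : nat) : TN N -> R :=
  fun t => \sum_(s : N.-tuple bool) (\1_(Fs s) t : R).
Arguments xN R N : clear implicits.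

Definition Tunion := {N : nat & TN N}.

Definition Funion : set (set Tunion) :=
  [set A | exists N : nat, exists2 B, FN N B & A = existT TN N @` B].

Definition charfun (I : Type) (A : set I) : {ptws I -> bool} :=
  fun i => `[< A i >].

(* Upper bound: T_N is partitioned into the fibers {u, u0, u00, ...} of the map
   deleting trailing zeros; each fiber lies in some F_s, and x is largest at its
   root u, where it equals 2^(N-|u|).
   Lower bound, by duality: the weights w(t) = 2^(N-|t|-1) for |t| < N and
   w(t) = 1 for |t| = N add up to 2^(N-m) along every chain of F_s starting at
   level m, so a block of F_N carries weight at most its supremum of x, and every
   admissible partition costs at least the total weight 2^N (1 + N/2).  The same
   computation on a fiber shows that the two bounds meet.
   Hence the 2^N vectors chi_{F_s}, of norm 1 each, sum to a vector of norm
   2^N (1 + N/2), which defeats any constant in the triangle inequality and, the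
   norm of X_F^* being subadditive, any isomorphism of X^F into X_F^*.  F is
   compact because it is hereditary and contains every set all of whose finite
   subsets it contains (two points of different T_N never share a member). *)

From HB Require Import structures.
From mathcomp Require Import all_boot all_order all_algebra.
From mathcomp Require Import all_classical all_reals all_analysis.
From mathcomp Require Import zify lra.
Import Order.TTheory GRing.Theory Num.Theory.
Local Open Scope classical_set_scope.
Local Open Scope ring_scope.
Set Implicit Arguments.
Unset Strict Implicit.
Unset Printing Implicit Defensive.

Section SumsOfBlocks.
Context (R : realType) (I : choiceType).
Local Open Scope ereal_scope.
Implicit Types (A B : set I) (a : I -> \bar R).

Lemma esum_bigcup_disjoint (P : set (set I)) a :
  (forall A B, P A -> P B -> A <> B -> A `&` B = set0) -> (forall i, 0 <= a i) ->
  \esum_(i in \bigcup_(A in P) A) a i = \esum_(A in P) \esum_(i in A) a i.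
Proof.
move=> disjP a0; rewrite esum_esum//; apply: reindex_esum => //; split.
- by move=> [/= A i] [PA Ai]; exists A.
- move=> [/= A1 i] [/= A2 j]; rewrite !inE /= => -[P1 Ai] [P2 Aj] ij.
  subst j; congr pair.
  apply: contrapT => A12; have /seteqP[+ _] := disjP _ _ P1 P2 A12.
  by move/(_ i (conj Ai Aj)).
- by move=> i [A PA Ai] /=; exists (A, i).
Qed.

Lemma esum_le_subset A B a : A `<=` B -> (forall i, B i -> 0 <= a i) ->
  \esum_(i in A) a i <= \esum_(i in B) a i.
Proof.
move=> AB a0; rewrite [leRHS](esumID A) // (setIidr AB) leeDl //.
by apply: esum_ge0 => i [Bi _]; apply: a0.
Qed.

End SumsOfBlocks.

Section UpperNorm.
Context (R : realType) (I : choiceType).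
Local Open Scope ereal_scope.
Implicit Types (F : set (set I)) (A S : set I) (x : I -> R).

Lemma blocksup_ge0 x A : 0 <= blocksup x A.
Proof. by apply: ereal_sup_ubound; left. Qed.

Lemma blocksup_ge x A p : A p -> (`|x p|)%:E <= blocksup x A.
Proof. by move=> Ap; apply: ereal_sup_ubound; right; exists p. Qed.

Lemma blocksup_le x A (M : R) : (0 <= M)%R ->
  (forall p, A p -> (`|x p| <= M)%R) -> blocksup x A <= M%:E.
Proof.
move=> M0 xM; apply: ge_ereal_sup => _ [->|[p Ap <-]]; by rewrite lee_fin ?xM.
Qed.

Lemma blocksup_image (J : choiceType) x (f : J -> I) (B : set J) :
  blocksup x (f @` B) = blocksup (x \o f) B.
Proof. by rewrite /blocksup image_comp. Qed.

Lemma upnorm_ge_esum F x (w : I -> \bar R) : (forall i, 0 <= w i) ->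
  (forall A, F A -> \esum_(i in A) w i <= blocksup x A) ->
  \esum_(i in setT) w i <= upnorm F x.
Proof.
move=> w0 wF; apply: le_ereal_inf_tmp => _ [P [[_ covP disjP] PF] <-].
rewrite -covP esum_bigcup_disjoint //; apply: le_esum => A PA.
exact/wF/PF.
Qed.

Lemma upnorm_le_esum F x (w : I -> \bar R) P : partitions_in F P ->
  (forall i, 0 <= w i) -> (forall A, P A -> blocksup x A <= \esum_(i in A) w i) ->
  upnorm F x <= \esum_(i in setT) w i.
Proof.
move=> PF w0 wP; have [[_ covP disjP] _] := PF.
apply: le_trans (ereal_inf_lbound _) _; first by exists P.
by rewrite -covP esum_bigcup_disjoint //; apply: le_esum.
Qed.

Lemma upnorm_ge_norm F x p : (`|x p|)%:E <= upnorm F x.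
Proof.
apply: le_ereal_inf_tmp => _ [P [[_ covP _] _] <-].
have : (\bigcup_(A in P) A) p by rewrite covP.
move=> [A PA Ap]; apply: le_trans (blocksup_ge x Ap) _.
rewrite -[X in X <= _](esum_set1 (a := fun B => blocksup x B)) ?blocksup_ge0 //.
by apply: esum_le_subset => [B -> //|B _]; apply: blocksup_ge0.
Qed.

Lemma partitions_in_compl_singletons F S :
  F S -> F set0 -> (forall p, ~ S p -> F [set p]) ->
  partitions_in F ([set set0; S] `|` [set [set p] | p in ~` S]).
Proof.
move=> FS F0 F1; split; first split.
- by left; left.
- apply/seteqP; split => // p _.
  have [Sp|nSp] := pselect (S p); first by exists S => //; left; right.
  by exists [set p] => //; right; exists p.
- move=> A B PA PB AB; apply/seteqP; split => // p [Ap Bp]; apply: AB.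
  case: PA Ap => [[->|->]|[a Sa <-]] /= Ap;
    case: PB Bp => [[->|->]|[b Sb <-]] /= Bp //.
  + by case: Sb; rewrite -Bp.
  + by case: Sa; rewrite -Ap.
  + by rewrite -Ap -Bp.
- by move=> A [[->|->]|[p Sp <-]] //; apply: F1.
Qed.

Lemma upnorm_le_blocksup F x S :
  F S -> F set0 -> (forall p, ~ S p -> F [set p]) ->
  (forall p, ~ S p -> x p = 0%R) -> upnorm F x <= blocksup x S.
Proof.
move=> FS F0 F1 xS.
pose P := [set set0; S] `|` [set [set p] | p in ~` S].
apply: le_trans (ereal_inf_lbound _) _.
  by exists P => //; apply: partitions_in_compl_singletons.
have PS : P `&` [set S] = [set S] by apply/setIidr => _ ->; left; right.
rewrite -(esum_set1 (a := fun A => blocksup x A)) ?blocksup_ge0 // -PS esum_mkcondr.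
apply: le_esum => A [[->|->]|[p Sp <-]].
- by case: ifP => // _; apply: blocksup_le.
- by rewrite mem_set.
- by case: ifP => // _; apply: blocksup_le => // q ->; rewrite xS ?normr0.
Qed.

End UpperNorm.

Section HereditaryClosure.
Context (I : choiceType).
Implicit Types G H : set (set I).

Lemma hereditary_hered_closure G : hereditary (hered_closure G).
Proof. by move=> A B GA BA H hH GH; apply: hH (GA H hH GH) BA. Qed.

Lemma sub_hered_closure G : G `<=` hered_closure G.
Proof. by move=> A GA H hH GH; apply: GH. Qed.

Lemma hered_closureP G B : hered_closure G B <-> exists2 A, G A & B `<=` A.
Proof.
split; last first.
  by move=> [A GA BA]; apply: hereditary_hered_closure (sub_hered_closure GA) BA.
move/(_ [set C | exists2 A, G A & C `<=` A]).
apply=> [A C [D GD AD] CA|A GA]; last by exists A.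
by exists D => //; apply: subset_trans AD.
Qed.

End HereditaryClosure.

Section DualNorm.
Context (R : realType) (I : choiceType).
Implicit Types (F : set (set I)) (f g x y : I -> R).

Lemma c00_0 : c00 (0 : I -> R).
Proof. by apply: (@sub_finite_set _ _ set0) => // k /=; rewrite eqxx. Qed.

Lemma c00D x y : c00 x -> c00 y -> c00 (x + y).
Proof.
move=> cx cy.
apply: (@sub_finite_set _ _ ([set k | x k != 0] `|` [set k | y k != 0])).
  move=> k /= xy0; apply: contrapT => /not_orP[/negP/negPn/eqP x0 /negP/negPn/eqP y0].
  by move: xy0; rewrite /GRing.add /= x0 y0 addr0 eqxx.
by rewrite finite_setU.
Qed.

Lemma c00_sum n (x : 'I_n -> I -> R) :
  (forall i, c00 (x i)) -> c00 (\sum_(i < n) x i).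
Proof. by move=> cx; apply: big_ind => //; [exact: c00_0|exact: c00D]. Qed.

Lemma pairingD f g x : c00 x -> pairing (f + g) x = pairing f x + pairing g x.
Proof.
move=> cx; rewrite /pairing -fsbig_split //.
by apply: eq_fsbigr => k _; rewrite mulrDl.
Qed.

Lemma dualnormD F f g :
  (dualnorm F (f + g)%R <= dualnorm F f + dualnorm F g)%E.
Proof.
apply: ge_ereal_sup => _ [x [cx xF] <-]; rewrite pairingD //.
apply: le_trans (_ : _ <= (`|pairing f x|)%:E + (`|pairing g x|)%:E)%E _.
  by rewrite -EFinD lee_fin ler_normD.
by apply: leeD; apply: ereal_sup_ubound; exists x.
Qed.

Lemma dualnorm0_le F : (dualnorm F (0 : I -> R)%R <= 0)%E.
Proof.
apply: ge_ereal_sup => _ [x _ <-].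
by rewrite /pairing fsbig1 ?normr0 // => k _; rewrite mul0r.
Qed.

Lemma dualnorm_sum F n (f : 'I_n -> I -> R) :
  (dualnorm F (\sum_(i < n) f i)%R <= \sum_(i < n) dualnorm F (f i))%E.
Proof.
apply: (big_ind2 (fun g e => dualnorm F g <= e)%E) => //; first exact: dualnorm0_le.
by move=> g1 e1 g2 e2 le1 le2; apply: le_trans (dualnormD _ _ _) (leeD _ _).
Qed.

Variable J : (I -> R) -> (I -> R).
Hypothesis linJ : forall (c : R) x y, c00 x -> c00 y ->
  J (fun t => c * x t + y t) = (fun t => c * J x t + J y t).

Lemma linear_c00_sum n (x : 'I_n -> I -> R) : (forall i, c00 (x i)) ->
  J (\sum_(i < n) x i) = \sum_(i < n) J (x i).
Proof.
move=> cx.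
have addJ y z : c00 y -> c00 z -> J (y + z) = J y + J z.
  move=> cy cz; have -> : y + z = (fun t => 1 * y t + z t).
    by apply/funext => t; rewrite mul1r.
  by rewrite linJ //; apply/funext => t; rewrite mul1r.
suff [] : c00 (\sum_(i < n) x i) /\ J (\sum_(i < n) x i) = \sum_(i < n) J (x i).
  by [].
apply: (big_ind2 (fun y z => c00 y /\ J y = z)) => [| y1 z1 y2 z2 [c1 <-] [c2 <-] |].
- split; first exact: c00_0.
  have := addJ 0 0 c00_0 c00_0; rewrite addr0.
  by move/(congr1 (fun h => h - J 0)); rewrite addrK subrr.
- by split; [exact: c00D | exact: addJ].
- by move=> i _; split.
Qed.

End DualNorm.

Section Tree.
Context (N : nat).
Implicit Types (s : N.-tuple bool) (t : TN N).

Lemma size_take_tuple s k : (size (take k s) <= N)%N.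
Proof. by rewrite size_take size_tuple; case: ifP => // /ltnW. Qed.

Definition take_node s k : TN N := exist _ (take k s) (size_take_tuple s k).

Lemma size_take_node s k : (k <= N)%N -> size (val (take_node s k)) = k.
Proof. by move=> kN; rewrite /= size_take size_tuple; case: ltngtP kN. Qed.

Lemma FsP s t : Fs s t <-> take (size (val t)) s = val t.
Proof.
split=> [[k kN ->]|st]; last by exists (size (val t)); first exact: (valP t).
by rewrite size_take size_tuple; case: ltngtP kN => // ->.
Qed.

Lemma Fs_take_node s k : (k <= N)%N -> Fs s (take_node s k).
Proof. by exists k. Qed.

Lemma Fs_image s : Fs s = take_node s @` `I_N.+1.
Proof.
apply/seteqP; split=> [t /FsP st|_ [k kN <-]]; last exact: Fs_take_node.
by exists (size (val t)); [rewrite /= ltnS; exact: (valP t) | exact: val_inj].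
Qed.

Lemma FN_sub_Fs B : FN N B <-> exists s, B `<=` Fs s.
Proof.
rewrite /FN hered_closureP.
split=> [[_ [s _ <-] Bs]|[s Bs]]; first by exists s.
by exists (Fs s) => //; exists s.
Qed.

Lemma card_tuple_prefix (u : seq bool) : (size u <= N)%N ->
  #|[pred s : N.-tuple bool | take (size u) s == u]| = (2 ^ (N - size u))%N.
Proof.
move=> uN; set k := size u.
have sz (r : (N - k).-tuple bool) : size (u ++ r) == N.
  by rewrite size_cat size_tuple subnKC.
pose f r := Tuple (sz r).
have f_inj : injective f.
  move=> r1 r2 /(congr1 val) /= /eqP; rewrite eqseq_cat // => /andP[_ /eqP r12].
  exact: val_inj.
rewrite -[X in (X ^ _)%N]card_bool -card_tuple -(card_imset _ f_inj).
apply: eq_card => s; rewrite !inE; apply/idP/imsetP => [/eqP su|[r _ ->]].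
  by exists [tuple of drop k s] => //; apply: val_inj; rewrite /= -su cat_take_drop.
by rewrite /= take_size_cat.
Qed.

Lemma xNE (R : realType) t : xN R N t = 2 ^+ (N - size (val t)).
Proof.
rewrite /xN (eq_bigr (fun s => if take (size (val t)) s == val t then 1 else 0)).
  rewrite -big_mkcond sumr_const card_tuple_prefix; last exact: (valP t).
  by rewrite -natrX -mulr_natl mulr1.
move=> s _; rewrite indicE; case: ifPn => [/eqP/FsP/mem_set -> //|st].
by rewrite memNset // => /FsP/eqP; apply/negP.
Qed.

End Tree.

Section Weights.
Context (R : realType) (N : nat).
Implicit Types (s : N.-tuple bool) (t : TN N).

Definition weight (k : nat) : R := if (k < N)%N then 2 ^+ (N - k.+1) else 1.

Definition node_weight t : R := weight (size (val t)).

Definition weight_ratio (k : nat) : R := if (k < N)%N then 2^-1 else 1.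

Definition chain s m := Fs s `&` [set t | (m <= size (val t))%N].

Lemma weight_ge0 k : 0 <= weight k.
Proof. by rewrite /weight; case: ifP. Qed.

Local Open Scope ereal_scope.

Lemma esum_Fs s (g : nat -> R) : (forall k, 0 <= g k)%R ->
  \esum_(t in Fs s) (g (size (val t)))%:E = (\sum_(k < N.+1) g k)%:E.
Proof.
move=> g0; rewrite Fs_image esum_image; last first.
  move=> k1 k2; rewrite !inE /= !ltnS => k1N k2N /(congr1 (fun t => size (val t))).
  by rewrite !size_take_node.
transitivity (\esum_(k in `I_N.+1) (g k)%:E).
  by apply: eq_esum => k /= kN; rewrite size_take_node // -ltnS.
rewrite esum_fset; [|exact: finite_II|by move=> *; rewrite lee_fin].
by rewrite -fsbig_ord sumEFin.
Qed.

Lemma sum_weight_from m : (m <= N)%N ->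
  (\sum_(m <= k < N.+1) weight k = 2 ^+ (N - m))%R.
Proof.
move=> mN; rewrite -{1}(subKn mN); elim: (N - m)%N (leq_subr m N) => [_|j IH jN].
  by rewrite subn0 big_nat1 /weight ltnn expr0.
rewrite big_ltn ?ltnS ?leq_subr // subnSK // IH ?(ltnW jN) // /weight ifT; last by lia.
have -> : (N - (N - j.+1).+1 = j)%N by lia.
by rewrite exprS mulr2n mulrDl mul1r.
Qed.

Lemma weightE k : (k <= N)%N -> weight k = (weight_ratio k * 2 ^+ (N - k))%R.
Proof.
rewrite /weight /weight_ratio; case: ltngtP => // [kN _|-> _]; last first.
  by rewrite subnn mulr1.
by rewrite -(subnSK kN) exprS mulrA mulVf ?mul1r.
Qed.

Lemma esum_node_weight :
  \esum_(t in [set: TN N]) (node_weight t)%:E = ((2 ^+ N) * (1 + N%:R / 2))%:E.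
Proof.
have ratio0 k : (0 <= weight_ratio k)%R by rewrite /weight_ratio; case: ifP.
transitivity (\esum_(t in [set: TN N]) \sum_(s : N.-tuple bool)
    ((weight_ratio (size (val t)) * \1_(Fs s) t)%R)%:E).
  apply: eq_esum => t _; rewrite sumEFin -mulr_sumr -/(xN R N t) xNE.
  by rewrite /node_weight weightE //; exact: (valP t).
rewrite esum_sum; last by move=> t s _ _; rewrite lee_fin mulr_ge0.
transitivity (\sum_(s : N.-tuple bool) (\sum_(k < N.+1) weight_ratio k)%:E).
  apply: eq_bigr => s _; rewrite -(esum_Fs s) // [RHS]esum_mkcond.
  by apply: eq_esum => t _; rewrite indicE; case: (t \in Fs s); rewrite ?mulr1 ?mulr0.
rewrite big_ord_recr /= {2}/weight_ratio ltnn.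
rewrite (eq_bigr (fun _ => 2^-1)%R) => [|[k kN] _]; last by rewrite /weight_ratio kN.
rewrite sumEFin !sumr_const card_ord card_tuple card_bool.
congr (_%:E); rewrite -[X in X = _]mulr_natl natrX.
by congr (_ * _)%R; rewrite addrC -[(2^-1 *+ N)%R]mulr_natr mulrC.
Qed.

Lemma esum_chain s m : (m <= N)%N ->
  \esum_(t in chain s m) (node_weight t)%:E = (2 ^+ (N - m))%:E.
Proof.
move=> mN; pose g k := if (m <= k)%N then weight k else 0%R.
transitivity (\esum_(t in Fs s) (g (size (val t)))%:E).
  rewrite esum_mkcondr; apply: eq_esum => t _; rewrite /g /node_weight.
  case: ifPn => [/set_mem /= -> //|/negP mt].
  by case: ifPn => // mt'; case: mt; apply: mem_set.
rewrite esum_Fs => [|k]; last by rewrite /g; case: ifP => // _; exact: weight_ge0.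
by rewrite -(sum_weight_from mN) big_geq_mkord [X in _ = X%:E]big_mkcond.
Qed.

Lemma esum_weight_le_blocksup A : FN N A ->
  \esum_(t in A) (node_weight t)%:E <= blocksup (xN R N) A.
Proof.
move=> /FN_sub_Fs[s As].
have [->|/set0P[t0 At0]] := eqVneq A set0; first by rewrite esum_set0 blocksup_ge0.
pose sizeA k := `[< exists2 t, A t & size (val t) = k >].
have : exists k, sizeA k by exists (size (val t0)); apply/asboolP; exists t0.
case/ex_minnP => _ /asboolP[u Au <-] u_min.
apply: le_trans (blocksup_ge _ Au).
apply: le_trans (esum_le_subset (B := chain s (size (val u))) _ _) _.
- by move=> t At; split; [exact: As | apply: u_min; apply/asboolP; exists t].
- by move=> t _; rewrite lee_fin weight_ge0.
by rewrite esum_chain ?xNE ?ger0_norm ?exprn_ge0 //; exact: (valP u).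
Qed.

End Weights.

Fixpoint drop_false (l : seq bool) : seq bool :=
  if l is false :: l' then drop_false l' else l.

Definition trim (u : seq bool) : seq bool := rev (drop_false (rev u)).

Lemma drop_false_cat_nseq j l : drop_false (nseq j false ++ l) = drop_false l.
Proof. by elim: j. Qed.

Lemma drop_falseK l : drop_false (drop_false l) = drop_false l.
Proof. by elim: l => [|[] l IH]. Qed.

Lemma drop_false_decomp l :
  l = nseq (size l - size (drop_false l)) false ++ drop_false l.
Proof.
elim: l => [|[] l IH] //=; first by rewrite subnn.
have : (size (drop_false l) <= size l)%N by rewrite [in leqRHS]IH size_cat leq_addl.
by move/subSn => ->; rewrite /= -IH.
Qed.

Lemma trim_cat_nseq u j : trim (u ++ nseq j false) = trim u.
Proof. by rewrite /trim rev_cat rev_nseq drop_false_cat_nseq. Qed.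

Lemma trimK u : trim (trim u) = trim u.
Proof. by rewrite /trim revK drop_falseK. Qed.

Lemma trim_decomp u : u = trim u ++ nseq (size u - size (trim u)) false.
Proof.
by rewrite /trim size_rev -(size_rev u) -rev_nseq -rev_cat -drop_false_decomp revK.
Qed.

Lemma size_trim u : (size (trim u) <= size u)%N.
Proof. by rewrite [X in (_ <= size X)%N]trim_decomp size_cat leq_addr. Qed.

Lemma FN_set0 N : FN N set0.
Proof. by apply/FN_sub_Fs; exists [tuple of nseq N false]. Qed.

Section Fibers.
Context (R : realType) (N : nat).
Local Open Scope ereal_scope.
Implicit Types (t : TN N) (u : seq bool).

Lemma size_pad u : size (take N (u ++ nseq N false)) == N.
Proof. by rewrite size_takel // size_cat size_nseq leq_addl. Qed.

Definition pad u : N.-tuple bool := Tuple (size_pad u).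

Lemma take_pad u k : (size u <= k <= N)%N ->
  take k (pad u) = u ++ nseq (k - size u) false.
Proof.
move=> /andP[uk kN]; rewrite /= take_takel // take_cat ltnNge uk /=.
by rewrite take_nseq // leq_subLR (leq_trans kN) // leq_addl.
Qed.

Lemma Fs_pad t : Fs (pad (val t)) t.
Proof. by apply/FsP; rewrite take_pad ?leqnn ?(valP t) // subnn cats0. Qed.

Definition fiber t0 := [set t : TN N | trim (val t) = trim (val t0)].

Lemma fiber_chain t0 :
  fiber t0 = chain (pad (trim (val t0))) (size (trim (val t0))).
Proof.
rewrite /fiber; set u := trim (val t0); apply/seteqP; split=> t.
  move=> tu; have u_t : (size u <= size (val t))%N by rewrite -tu size_trim.
  split=> //; apply/FsP; rewrite take_pad ?u_t ?(valP t) //.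
  by rewrite -tu -trim_decomp.
move=> [/FsP tu u_t]; rewrite /= -tu take_pad ?u_t ?(valP t) //.
by rewrite trim_cat_nseq trimK.
Qed.

Lemma blocksup_fiber_le t0 :
  blocksup (xN R N) (fiber t0) <= \esum_(t in fiber t0) (node_weight R t)%:E.
Proof.
have uN : (size (trim (val t0)) <= N)%N := leq_trans (size_trim _) (valP t0).
rewrite fiber_chain esum_chain //; apply: blocksup_le; first by rewrite exprn_ge0.
move=> t [_ /= u_t]; rewrite xNE ger0_norm ?exprn_ge0 //.
by rewrite ler_eXn2l ?ltr1n // leq_sub2l.
Qed.

Lemma partitions_in_fibers :
  partitions_in (FN N) ([set set0] `|` [set fiber t | t in setT]).
Proof.
split; first split.
- by left.
- by apply/seteqP; split=> // t _; exists (fiber t) => //; right; exists t.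
- move=> A B [->|[a _ <-]] [->|[b _ <-]] AB; rewrite ?set0I ?setI0 //.
  apply/seteqP; split=> // t [/= ta tb]; apply: AB; apply/seteqP.
  by split=> t'; rewrite /fiber /= => ->; [rewrite -ta|rewrite -tb].
- move=> A [->|[a _ <-]]; first exact: FN_set0.
  by apply/FN_sub_Fs; eexists; rewrite fiber_chain; apply: subIsetl.
Qed.

Theorem upnorm_xN : upnorm (FN N) (xN R N) = ((2 ^+ N) * (1 + N%:R / 2))%:E.
Proof.
have w0 t : 0 <= (node_weight R t)%:E by rewrite lee_fin weight_ge0.
apply/eqP; rewrite eq_le -esum_node_weight; apply/andP; split.
  apply: (upnorm_le_esum partitions_in_fibers) => // A [->|[t _ <-]].
    by rewrite esum_set0; apply: blocksup_le.
  exact: blocksup_fiber_le.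
exact: upnorm_ge_esum (@esum_weight_le_blocksup R N).
Qed.

End Fibers.

Section Indicator.
Context (R : realType) (I : choiceType) (F : set (set I)) (S : set I).
Hypotheses (FS : F S) (F0 : F set0) (F1 : forall p, ~ S p -> F [set p]).

Lemma upnorm_indicator : S !=set0 -> upnorm F (\1_S : I -> R) = 1%:E.
Proof.
move=> [p Sp]; apply/eqP; rewrite eq_le; apply/andP; split.
  apply: le_trans (upnorm_le_blocksup FS F0 F1 _) _ => [q Sq|].
    by rewrite indicE memNset.
  by apply: blocksup_le => // q _; rewrite indicE; case: (q \in S); rewrite ?normr1 ?normr0.
by apply: le_trans (upnorm_ge_norm F _ p); rewrite indicE mem_set // normr1.
Qed.

End Indicator.

Lemma FN_set1 N (t : TN N) : FN N [set t].
Proof. by apply/FN_sub_Fs; exists (pad N (val t)) => _ ->; apply: Fs_pad. Qed.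

Lemma FN_Fs N (s : N.-tuple bool) : FN N (Fs s).
Proof. by apply/FN_sub_Fs; exists s. Qed.

Lemma Fs_neq0 N (s : N.-tuple bool) : Fs s !=set0.
Proof. by exists (take_node s 0); apply: Fs_take_node. Qed.

Theorem upnorm_indicator_Fs (R : realType) N (s : N.-tuple bool) :
  upnorm (FN N) (\1_(Fs s) : TN N -> R) = 1%:E.
Proof.
apply: upnorm_indicator (Fs_neq0 s); [exact: FN_Fs|exact: FN_set0|].
by move=> t _; apply: FN_set1.
Qed.

Lemma finite_Fs N (s : N.-tuple bool) : finite_set (Fs s).
Proof. by rewrite Fs_image; apply/finite_image/finite_II. Qed.

Lemma finite_TN N : finite_set [set: TN N].
Proof.
have -> : [set: TN N] = \bigcup_(s in [set: N.-tuple bool]) Fs s.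
  by apply/seteqP; split=> // t _; exists (pad N (val t)) => //; apply: Fs_pad.
by apply: bigcup_finite => [|s _]; [exact: finite_finset|exact: finite_Fs].
Qed.

Lemma Funion_set0 : Funion set0.
Proof. by exists 0%N, set0; rewrite ?image_set0 //; apply: FN_set0. Qed.

Lemma Funion_set1 p : Funion [set p].
Proof. by case: p => N t; exists N, [set t]; rewrite ?image_set1 //; apply: FN_set1. Qed.

Lemma Funion_tag A p q : Funion A -> A p -> A q -> tag p = tag q.
Proof. by move=> [N [B _ ->]] [t _ <-] [t' _ <-]. Qed.

Theorem Funion_finite : finite_members Funion.
Proof.
by move=> _ [N [B _ ->]]; apply/finite_image/(sub_finite_set _ (finite_TN N)).
Qed.

Theorem Funion_hered : hereditary Funion.
Proof.
move=> _ A' [N [B FB ->]] A'B; exists N.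
exists [set t | B t /\ A' (existT TN N t)].
  by apply: hereditary_hered_closure FB _ => t [].
apply/seteqP; split=> [p A'p|_ [t [_ A't] <-] //].
by have [t Bt tp] := A'B _ A'p; exists t => //; split; rewrite // tp.
Qed.

Theorem Funion_cover : covering Funion.
Proof. by apply/seteqP; split=> // p _; exists [set p] => //; apply: Funion_set1. Qed.

Lemma Funion_finite_character A :
  (forall B, finite_set B -> B `<=` A -> Funion B) -> Funion A.
Proof.
move=> finA; have [->|/set0P[[N t0] At0]] := eqVneq A set0; first exact: Funion_set0.
have A_tag p : A p -> tag p = N.
  move=> Ap; apply: (@Funion_tag [set p; existT TN N t0] p (existT TN N t0));
    [|by left|by right].
  by apply: finA (finite_set2 _ _) _ => q [->|->].
apply: finA => //; apply: (sub_finite_set _ (finite_image (existT TN N) (finite_TN N))).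
by case=> M t /[dup] /A_tag /= MN; subst M; exists t.
Qed.

Section CharfunCompact.
Context (I : choiceType) (F : set (set I)).
Hypothesis hF : hereditary F.
Hypothesis finchF : forall A, (forall B, finite_set B -> B `<=` A -> F B) -> F A.

Lemma closed_charfun_image : closed [set charfun A | A in F].
Proof.
have -> : [set charfun A | A in F] = \bigcap_(B in [set B | finite_set B /\ ~ F B])
    \bigcup_(p in B) [set g : {ptws I -> bool} | g p = false].
  apply/seteqP; split=> [_ [A FA <-] B [finB FB]|g gF].
    apply: contrapT => nB; apply/FB/(hF FA) => p Bp; apply: contrapT => Ap.
    by apply: nB; exists p => //=; rewrite /charfun asboolF.
  exists [set p | g p]; last by apply/funext => p; rewrite /charfun asboolb.
  apply: finchF => B finB Bg; apply: contrapT => FB.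
  by have [p Bp /= gp] := gF B (conj finB FB); move: (Bg p Bp); rewrite /= gp.
apply: closed_bigI => B [finB _]; apply: closed_bigcup => // p _.
have -> : [set g : {ptws I -> bool} | g p = false] = proj p @^-1` [set false] by [].
by apply: preimage_closed (discrete_closed _) => g _; apply: proj_continuous.
Qed.

Lemma compact_charfun_image : compact [set charfun A | A in F].
Proof.
apply: (subclosed_compact closed_charfun_image _ (@subsetT _ _)).
have := @tychonoff I (fun _ => bool) (fun _ => setT) (fun _ => bool_compact).
by congr compact; apply/seteqP; split.
Qed.

End CharfunCompact.

Theorem Funion_compact : compact [set charfun A | A in Funion].
Proof. exact: compact_charfun_image Funion_hered Funion_finite_character. Qed.

Lemma untag_existT (I : eqType) (T_ : I -> Type) (V : Type) (v0 : V) i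
    (f : T_ i -> V) (t : T_ i) :
  untag v0 f (existT T_ i t) = f t.
Proof. by rewrite (@untagE _ _ _ _ _ _ (existT T_ i t) (erefl i)). Qed.

Section TestVectors.
Context (R : realType) (N : nat).
Local Notation tuples := {: N.-tuple bool}.

Definition test_vector (i : 'I_#|tuples|) : Tunion -> R :=
  \1_(existT TN N @` Fs (enum_val i)).

Lemma c00_test_vector i : c00 (test_vector i).
Proof.
apply: sub_finite_set (finite_image (existT TN N) (finite_Fs (enum_val i))) => p /=.
by rewrite /test_vector indicE; case: (boolP (p \in _)) => [/set_mem|]; rewrite ?eqxx.
Qed.

Lemma upnorm_test_vector i : upnorm Funion (test_vector i) = 1%:E.
Proof.
apply: upnorm_indicator; [|exact: Funion_set0|by move=> p _; apply: Funion_set1|].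
  by exists N, (Fs (enum_val i)) => //; apply: FN_Fs.
by have [t Ft] := Fs_neq0 (enum_val i); exists (existT TN N t), t.
Qed.

Lemma sum_test_vector : \sum_(i < #|tuples|) test_vector i = untag 0 (xN R N).
Proof.
apply/funext=> -[M t]; rewrite fct_sumE /test_vector.
have [MN|MN] := eqVneq M N; last first.
  rewrite untag_dflt // big1 // => i _; rewrite indicE memNset //.
  by move=> [t' _ /(congr1 tag) /= NM]; rewrite NM eqxx in MN.
subst M; rewrite untag_existT /xN (eq_bigl (fun s => s \in tuples)) => [|s]; last first.
  by rewrite inE.
rewrite [X in _ = X]big_enum_val; apply: eq_bigr => i _; rewrite !indicE.
suff -> : (existT TN N t \in existT TN N @` Fs (enum_val i)) = (t \in Fs (enum_val i)).
  by [].
apply/idP/idP => /set_mem.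
  by move=> [t' Ft' e]; rewrite -(eq_from_Tagged e); apply: mem_set.
by move=> Ft; apply: mem_set; exists t.
Qed.

Lemma sum_upnorm_test_vector :
  (\sum_(i < #|tuples|) upnorm Funion (test_vector i) = (2 ^+ N)%:E)%E.
Proof.
under eq_bigr do rewrite upnorm_test_vector.
by rewrite sumEFin sumr_const card_ord card_tuple card_bool natrX.
Qed.

Lemma upnorm_untag_xN :
  (((2 ^+ N) * (1 + N%:R / 2))%:E <= upnorm Funion (untag 0%R (xN R N)))%E.
Proof.
pose w p := (untag 0 (@node_weight R N) p)%:E.
have w0 p : (0 <= w p)%E.
  by rewrite lee_fin /untag; case: eqP => // e; apply: weight_ge0.
have inj_existT B : set_inj B (existT TN N).
  by move=> t t' _ _ e; exact: eq_from_Tagged e.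
apply: le_trans (upnorm_ge_esum (w := w) w0 _); last first.
  move=> _ [M [B FB ->]]; have [MN|MN] := eqVneq M N; last first.
    by rewrite esum1 ?blocksup_ge0 // => _ [t _ <-]; rewrite /w untag_dflt.
  subst M; rewrite esum_image // blocksup_image.
  have -> : untag 0 (xN R N) \o existT TN N = xN R N.
    by apply/funext => t; rewrite /= untag_existT.
  under eq_esum do rewrite /w untag_existT.
  exact: esum_weight_le_blocksup.
rewrite -esum_node_weight.
apply: le_trans (esum_le_subset (A := existT TN N @` setT) _ (fun p _ => w0 p)) => //.
by rewrite esum_image //; apply: le_esum => t _; rewrite /w untag_existT.
Qed.

End TestVectors.

Lemma unbounded_growth_factor (R : realType) (c : R) :
  exists N : nat, c * 2 ^+ N < 2 ^+ N * (1 + N%:R / 2).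
Proof.
have [N cN] : exists N : nat, 2 * c < N%:R.
  by exists (Num.truncn (2 * c)).+1; apply: truncnS_gt.
by exists N; rewrite mulrC ltr_pM2l ?exprn_gt0 //; lra.
Qed.

Section Consequences.
Context (R : realType).
Local Open Scope ereal_scope.

Theorem no_upnorm_sum_bound : ~ exists C : R, (0 < C)%R /\
  forall (n : nat) (x : 'I_n -> Tunion -> R), (forall i, c00 (x i)) ->
    upnorm Funion (fun t => \sum_(i < n) x i t)%R
      <= C%:E * \sum_(i < n) upnorm Funion (x i).
Proof.
move=> [C [C0 hC]]; have [N] := unbounded_growth_factor C; apply/negP; rewrite -leNgt.
have := hC _ (@test_vector R N) (@c00_test_vector R N).
rewrite -fct_sumE sum_test_vector sum_upnorm_test_vector -EFinM => le_xN.
by rewrite -lee_fin; apply: le_trans le_xN; apply: upnorm_untag_xN.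
Qed.

Theorem no_upnorm_dual_isomorphism :
  ~ exists (J : (Tunion -> R) -> (Tunion -> R)) (a b : R),
    [/\ (0 < a)%R, (0 < b)%R,
     (forall (c : R) (x y : Tunion -> R), c00 x -> c00 y ->
        J (fun t => c * x t + y t)%R = (fun t => c * J x t + J y t)%R) &
     (forall x, c00 x ->
        a%:E * upnorm Funion x <= dualnorm Funion (J x) /\
        dualnorm Funion (J x) <= b%:E * upnorm Funion x)].
Proof.
move=> [J [a [b [a0 b0 linJ hJ]]]].
have [N] := unbounded_growth_factor (b / a); apply/negP; rewrite -leNgt.
have c00_xN : c00 (untag 0%R (xN R N)).
  by rewrite -sum_test_vector; apply: c00_sum => i; apply: c00_test_vector.
have a0E : 0 <= a%:E by rewrite lee_fin ltW.
have le_xN := le_trans (lee_wpmul2l a0E (upnorm_untag_xN R N)) (hJ _ c00_xN).1.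
rewrite -sum_test_vector (linear_c00_sum linJ) in le_xN; last exact: c00_test_vector.
have le_sum : \sum_(i < #|{: N.-tuple bool}|) dualnorm Funion (J (test_vector R i))
    <= \sum_(i < #|{: N.-tuple bool}|) b%:E * upnorm Funion (test_vector R i).
  by apply: lee_sum => i _; apply: (hJ _ _).2; apply: c00_test_vector.
have := le_trans le_xN (le_trans (dualnorm_sum _ _) le_sum).
rewrite -ge0_sume_distrr => [|i _]; last by rewrite upnorm_test_vector.
rewrite sum_upnorm_test_vector -!EFinM lee_fin => le_ab.
by rewrite mulrAC ler_pdivlMr // mulrC.
Qed.

End Consequences.

Theorem mainTheorem12 (R : realType) :
  (* ||x||^{F_N} = 2^N (1 + N/2) *)
  (forall N : nat,
      upnorm (FN N) (xN R N) = ((2 ^+ N) * (1 + N%:R / 2))%:E) /\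
  (* ||chi_{F_s}||^{F_N} = 1 *)
  (forall (N : nat) (s : N.-tuple bool),
      upnorm (FN N) (\1_(Fs s) : TN N -> R) = 1%:E) /\
  (* F is a compact hereditary family of finite sets covering T *)
  (finite_members Funion /\ hereditary Funion /\ covering Funion /\
   compact [set charfun A | A in Funion]) /\
  (* no constant C > 0 with ||sum x_i||^F <= C sum ||x_i||^F on c00 *)
  (~ exists C : R, 0 < C /\
       forall (n : nat) (x : 'I_n -> Tunion -> R),
         (forall i, c00 (x i)) ->
         (upnorm Funion (fun t => (\sum_(i < n) x i t)%R)
            <= C%:E * \sum_(i < n) upnorm Funion (x i))%E) /\
  (* X^F is not isomorphic to X_F^* : there is no linear map from
     (c00, ||.||^F) into X_F^* (represented as coefficient functions with
     the dual norm) which is an isomorphism onto its image *)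
  (~ exists (J : (Tunion -> R) -> (Tunion -> R)) (a b : R),
       [/\ 0 < a, 0 < b,
        (forall (c : R) (x y : Tunion -> R), c00 x -> c00 y ->
            J (fun t => c * x t + y t) = (fun t => c * J x t + J y t)) &
        (forall x, c00 x ->
            (a%:E * upnorm Funion x <= dualnorm Funion (J x))%E /\
            (dualnorm Funion (J x) <= b%:E * upnorm Funion x)%E)]).
Proof.
split; first by move=> N; apply: upnorm_xN.
split; first by move=> N s; apply: upnorm_indicator_Fs.
split; first by split; [|split; [|split]];
  [exact: Funion_finite|exact: Funion_hered|exact: Funion_cover|exact: Funion_compact].
by split; [exact: no_upnorm_sum_bound|exact: no_upnorm_dual_isomorphism].
Qed.
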